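(* Let $\mathcal H$ be a real Hilbert space and let $f:\mathcal H\to\mathbb R$ be continuously differentiable and $\mu$-strongly convex for some $\mu>0$, with unique minimizer $x^*$. Let $t_0>0$ and let $u:[t_0,+\infty[\to\mathcal H$ be a classical solution of $$\dddot u(t)+3\sqrt\mu\,\ddot u(t)+2\mu\,\dot u(t)+\sqrt\mu\,\nabla f\Big(u(t)+\tfrac{1}{\sqrt\mu}\dot u(t)\Big)=0 .$$ Set $y(t)=u(t)+\frac{1}{\sqrt\mu}\dot u(t)$, $$\mathcal E(t)=f(y(t))-\inf_{\mathcal H}f+\frac12\Big\|\sqrt\mu\,(y(t)-x^* )+\dot u(t)+\tfrac1{\sqrt\mu}\ddot u(t)\Big\|^2,$$ $F(t_0)=f(u(t_0))-\inf_{\mathcal H}f$ and $C=\mathcal E(t_0)e^{\sqrt\mu\,t_0}$. Then for all $t\ge t_0$: $$f(y(t))-\inf_{\mathcal H}f\le \mathcal E(t_0)e^{-\sqrt\mu(t-t_0)};$$ $$f(u(t))-\inf_{\mathcal H}f\le\big(C\sqrt\mu\,t+e^{\sqrt\mu t_0}F(t_0)-C\sqrt\mu\,t_0\big)e^{-\sqrt\mu t};$$ $$\|y(t)-x^*\|^2\le\frac{e^{\sqrt\mu t_0}}{\sqrt\mu}\Big(\sqrt\mu\,\|y(t_0)-x^*\|^2+2\mathcal E(t_0)(t-t_0)\Big)e^{-\sqrt\mu t};$$ $$\|u(t)-x^*\|^2\le\frac{2}{\mu}\big(C\sqrt\mu\,t+e^{\sqrt\mu t_0}F(t_0)-C\sqrt\mu\,t_0\big)e^{-\sqrt\mu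 t}.$$
   Context: $f$ is $\mu$-strongly convex if $f-\frac\mu2\|\cdot\|^2$ is convex. $\dot u,\ddot u,\dddot u$ are time derivatives of $u$. *)

From HB Require Import structures.
From mathcomp Require Import all_boot all_order all_algebra.
From mathcomp Require Import all_classical all_reals all_analysis.
Set Implicit Arguments. Unset Strict Implicit. Unset Printing Implicit Defensive.
Import Order.TTheory GRing.Theory Num.Theory.
Import numFieldNormedType.Exports.
Local Open Scope classical_set_scope.
Local Open Scope ring_scope.

(* A real Hilbert space: a complete normed space V over R whose norm is
   induced by an inner product [inner]. *)
Definition is_inner_product {R : realType} {V : normedModType R}
  (inner : V -> V -> R) : Prop :=
  (forall x y, inner x y = inner y x) /\
  (forall a x y z, inner (a *: x + y) z = a * inner x z + inner y z) /\
  (forall x, `|x| ^+ 2 = inner x x).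

Definition convex_fun {R : realType} {V : normedModType R} (g : V -> R) : Prop :=
  forall (x y : V) (l : R), 0 <= l -> l <= 1 ->
    g (l *: x + (1 - l) *: y) <= l * g x + (1 - l) * g y.

Definition strongly_convex {R : realType} {V : normedModType R} (mu : R)
  (f : V -> R) : Prop :=
  convex_fun (fun x => f x - mu / 2 * `|x| ^+ 2).

Definition C1_with_gradient {R : realType} {V : normedModType R}
  (inner : V -> V -> R) (f : V -> R) (gradf : V -> V) : Prop :=
  (forall x, differentiable f x) /\
  (forall x h, 'd f x h = inner (gradf x) h) /\
  continuous gradf.

From HB Require Import structures.
From mathcomp Require Import all_boot all_order all_algebra.
From mathcomp Require Import all_classical all_reals all_analysis.
From mathcomp Require Import ring lra.

Import Order.TTheory GRing.Theory Num.Theory.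
Import numFieldNormedType.Exports.
Local Open Scope classical_set_scope.
Local Open Scope ring_scope.

(* Write s = sqrt mu, y = u + u'/s for the
   look-ahead point and w = s (y - x* ) + y' for the "momentum".  The equation
   of motion is exactly the first-order law w' = - s y' - grad f(y), and the
   strong-convexity gradient inequality at y then shows that the energy
     E = f(y) - f* + |w|^2 / 2
   satisfies E' <= - s E, hence exp(s t) E(t) is nonincreasing.  The other
   three estimates follow the same pattern: a quantity g with
   exp(s t) (g' + s g) <= K obeys exp(s t) g(t) - K t <= exp(s t0) g(t0) - K t0,
   applied to g = f(u) - f* (using the gradient inequality between u and y)
   and g = |y - x*|^2; the last bound is quadratic growth applied to the
   second one. *)

Lemma cvg_sqnorm {R : realType} {V : normedModType R} {T : Type}
  (F : set_system T) {FF : Filter F} (g : T -> V) (l : V) :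
  g @ F --> l -> (fun x => `|g x| ^+ 2) @ F --> `|l| ^+ 2.
Proof.
move=> hg; under eq_fun do rewrite expr2.
by rewrite expr2; apply: cvgM; apply: cvg_norm.
Qed.

Section InnerProduct.
Context {R : realType} {V : normedModType R} {inner : V -> V -> R}.
Hypothesis inner_prod : is_inner_product inner.

Lemma innerC x y : inner x y = inner y x.
Proof. by case: inner_prod. Qed.

Lemma normE x : `|x| ^+ 2 = inner x x.
Proof. by case: inner_prod => _ []. Qed.

Lemma innerDl x y z : inner (x + y) z = inner x z + inner y z.
Proof. by case: inner_prod => _ [lin _]; rewrite -[x]scale1r lin mul1r scale1r. Qed.

Lemma inner0l z : inner 0 z = 0.
Proof.
case: inner_prod => _ [lin _]; have := lin 1 0 0 z.
by rewrite scaler0 addr0 mul1r; lra.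
Qed.

Lemma innerZl a x z : inner (a *: x) z = a * inner x z.
Proof.
by case: inner_prod => _ [lin _]; rewrite -[a *: x]addr0 lin inner0l addr0.
Qed.

Lemma innerDr x y z : inner z (x + y) = inner z x + inner z y.
Proof. by rewrite !(innerC z) innerDl. Qed.

Lemma innerZr a x z : inner z (a *: x) = a * inner z x.
Proof. by rewrite !(innerC z) innerZl. Qed.

Lemma innerNl x z : inner (- x) z = - inner x z.
Proof. by rewrite -scaleN1r innerZl mulN1r. Qed.

Lemma innerNr x z : inner z (- x) = - inner z x.
Proof. by rewrite !(innerC z) innerNl. Qed.

Lemma inner_ge0 x : 0 <= inner x x.
Proof. by rewrite -normE sqr_ge0. Qed.

Lemma polarization x y : inner x y = (`|x + y| ^+ 2 - `|x - y| ^+ 2) / 4.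
Proof. by rewrite !normE !(innerDl, innerNl, innerDr, innerNr) (innerC y x); field. Qed.

(* Continuity of the inner product, obtained from that of the norm through
   polarization. *)
Lemma cvg_inner {T : Type} (F : set_system T) {FF : Filter F} (a b : T -> V) a0 b0 :
  a @ F --> a0 -> b @ F --> b0 ->
  (fun x => inner (a x) (b x)) @ F --> inner a0 b0.
Proof.
move=> ha hb; rewrite polarization.
under eq_fun do rewrite polarization.
by apply: cvgMr_tmp; apply: cvgB; apply: cvg_sqnorm; [apply: cvgD | apply: cvgB].
Qed.

(* Product rule for the inner product of two differentiable curves: the
   difference quotient splits into two inner products, each of which converges
   by continuity of the inner product (b_cont supplies the continuity of b). *)
Lemma is_derive_inner {a b : R -> V} {t : R} {da db : V} :
  is_derive t 1 a da -> is_derive t 1 b db ->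
  is_derive t 1 (fun x => inner (a x) (b x)) (inner da (b t) + inner (a t) db).
Proof.
move=> [ha hda] [hb hdb].
have b_cont : (fun h : R => b (h *: 1 + t)) @ 0^' --> b t.
  suff : {for 0, continuous (fun h : R => b (h *: 1 + t))}.
    by move=> /continuous_withinNx; rewrite scale0r add0r.
  exact/differentiable_continuous/derivable1_diffP/(derivable1P _ _ _).1.
have quotient : (fun h : R => h^-1 *: (((fun x => inner (a x) (b x)) \o shift t) (h *: 1)
            - inner (a t) (b t))) @ 0^' --> inner da (b t) + inner (a t) db.
  have -> : (fun h : R => h^-1 *: (((fun x => inner (a x) (b x)) \o shift t) (h *: 1)
            - inner (a t) (b t))) =
      (fun h : R => inner (h^-1 *: ((a \o shift t) (h *: 1) - a t)) (b (h *: 1 + t))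
        + inner (a t) (h^-1 *: ((b \o shift t) (h *: 1) - b t))).
    apply: funext => h /=.
    rewrite innerZl innerZr !(innerDl, innerNl, innerDr, innerNr) /shift /=.
    rewrite -mulrDr; congr (_ * _); lra.
  apply: cvgD; first by apply: cvg_inner => //; rewrite -hda; exact: ha.
  by apply: cvg_inner; [exact: cvg_cst | rewrite -hdb; exact: hb].
apply: DeriveDef; first by apply/cvg_ex; eexists; exact: quotient.
exact: cvg_lim quotient.
Qed.

Lemma is_derive_sqnorm {a : R -> V} {t : R} {da : V} :
  is_derive t 1 a da -> is_derive t 1 (fun x => `|a x| ^+ 2) (2 * inner (a t) da).
Proof.
move=> ha; have -> : (fun x => `|a x| ^+ 2) = (fun x => inner (a x) (a x)).
  by apply: funext => x; rewrite normE.
by apply: is_derive_eq (is_derive_inner ha ha) _; rewrite innerC -mulr2n mulr_natl.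
Qed.

End InnerProduct.

Lemma is_derive_comp_grad {R : realType} {V : normedModType R}
  {inner : V -> V -> R} {f : V -> R} {gradf : V -> V} {g : R -> V} {t : R} {dg : V} :
  C1_with_gradient inner f gradf ->
  is_derive t 1 g dg -> is_derive t 1 (f \o g) (inner (gradf (g t)) dg).
Proof.
move=> [fd [df_grad _]] [g_der dgE].
have dg_diff : differentiable g t by apply/derivable1_diffP.
have dfg : differentiable (f \o g) t by apply: differentiable_comp.
apply: DeriveDef; first by apply/derivable1_diffP.
by rewrite deriveE // diff_comp //= df_grad -deriveE // dgE.
Qed.

Lemma le_lim_at_right0 {R : realType} {q : R -> R} {L a b : R} :
  q h @[h --> 0^'+] --> L -> (forall h, 0 < h -> h <= 1 -> q h <= a + b * h) ->
  L <= a.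
Proof.
move=> qL bound.
have lin : a + b * h @[h --> 0^'+] --> a.
  rewrite -[X in _ --> X]addr0 -[X in _ --> _ + X](mulr0 b).
  apply: cvgD; first exact: cvg_cst.
  by apply: cvgMl_tmp; apply: cvg_at_right_filter; exact: cvg_id.
apply: (ler_cvg_to qL lin); near=> h; apply: bound.
- by near: h; exact: nbhs_right_gt.
- by near: h; exact: nbhs_right_le.
Unshelve. all: end_near.
Qed.

Section StrongConvexity.
Context {R : realType} {V : normedModType R} {inner : V -> V -> R}
  {f : V -> R} {mu : R}.
Hypotheses (inner_prod : is_inner_product inner) (f_sc : strongly_convex mu f).

Lemma strongly_convex_segment (z x : V) (l : R) : 0 <= l -> l <= 1 ->
  f (l *: z + (1 - l) *: x) <=
  l * f z + (1 - l) * f x - mu / 2 * (l * (1 - l)) * `|z - x| ^+ 2.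
Proof.
move=> l0 l1; move: (f_sc z x l l0 l1).
rewrite !(normE inner_prod) !(innerDl inner_prod, innerZl inner_prod,
  innerNl inner_prod, innerDr inner_prod, innerZr inner_prod, innerNr inner_prod).
by rewrite (innerC inner_prod x z); lra.
Qed.

(* Gradient inequality of a differentiable strongly convex function: the
   directional derivative at x is the limit of the difference quotients, which
   the segment inequality bounds. *)
Lemma strongly_convex_grad {gradf : V -> V} (x z : V) :
  C1_with_gradient inner f gradf ->
  f x + inner (gradf x) (z - x) + mu / 2 * `|z - x| ^+ 2 <= f z.
Proof.
case=> fd [df_grad _]; set v := z - x.
have quot : (fun h : R => h^-1 * (f (h *: v + x) - f x)) @ 0^'+
    --> inner (gradf x) v.
  rewrite -df_grad -deriveE //; apply: cvg_dnbhs_at_right.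
  exact: (diff_derivable (fd x)).
suff : inner (gradf x) v <= f z - f x - mu / 2 * `|v| ^+ 2 by lra.
apply: (le_lim_at_right0 (b := mu / 2 * `|v| ^+ 2) quot) => h h0 h1.
have := strongly_convex_segment z x h (ltW h0) h1.
have -> : h *: z + (1 - h) *: x = h *: v + x.
  by rewrite /v scalerBr scalerBl scale1r addrA addrAC.
move=> hseg; rewrite -/v in hseg; rewrite ler_pdivrMl //; lra.
Qed.

(* Quadratic growth around a minimizer, obtained from the segment inequality
   between z and the minimizer by letting the weight of z tend to 0. *)
Lemma strongly_convex_growth {xs : V} (z : V) : (forall x, f xs <= f x) ->
  mu / 2 * `|z - xs| ^+ 2 <= f z - f xs.
Proof.
move=> xs_min; set c := mu / 2 * `|z - xs| ^+ 2.
apply: (le_lim_at_right0 (b := c) (cvg_cst c)) => h h0 h1.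
have := strongly_convex_segment z xs h (ltW h0) h1.
have := xs_min (h *: z + (1 - h) *: xs).
move=> min_le seg_le; rewrite -(ler_pM2l h0) /c; lra.
Qed.

End StrongConvexity.

Lemma le_start_of_derive_le0 {R : realType} {g dg : R -> R} {t0 : R} :
  (forall t, t0 < t -> is_derive t 1 g (dg t)) -> (forall t, t0 < t -> dg t <= 0) ->
  g x @[x --> t0^'+] --> g t0 -> forall t, t0 <= t -> g t <= g t0.
Proof.
move=> g_der dg_le0 g_rc t t0t.
apply: (@ler0_derive1_nincry R g t0) => // [x|x|].
- by rewrite in_itv /= andbT => /g_der [].
- rewrite in_itv /= andbT => t0x; rewrite derive1E.
  by case: (g_der x t0x) => _ ->; exact: dg_le0.
- apply/continuous_within_itvcyP; split => // x; rewrite in_itv /= andbT => t0x.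
  by apply/differentiable_continuous/derivable1_diffP; case: (g_der x t0x).
Qed.

Lemma is_derive_scale {R : realType} (k t : R) : is_derive t 1 (fun x : R => k * x) k.
Proof.
have k_id := @is_deriveZ R R^o R^o id k t 1 1 (is_derive_id t 1).
by apply: is_derive_eq k_id _; exact: mulr1.
Qed.

Lemma is_derive_expR_scale {R : realType} (k t : R) :
  is_derive t 1 (fun x : R => expR (k * x)) (expR (k * t) * k).
Proof. by apply: (@is_derive1_comp R expR (fun x => k * x)); exact: is_derive_scale. Qed.

Lemma weighted_decay {R : realType} {g dg : R -> R} {s K t0 : R} :
  (forall t, t0 < t -> is_derive t 1 g (dg t)) ->
  (forall t, t0 < t -> expR (s * t) * (dg t + s * g t) <= K) ->
  g x @[x --> t0^'+] --> g t0 ->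
  forall t, t0 <= t -> expR (s * t) * g t - K * t <= expR (s * t0) * g t0 - K * t0.
Proof.
move=> g_der dg_le g_rc.
apply: (le_start_of_derive_le0 (dg := fun t => expR (s * t) * (dg t + s * g t) - K)).
- move=> t t0t.
  have h := is_deriveB (is_deriveM (is_derive_expR_scale s t) (g_der t t0t))
    (is_derive_scale K t).
  by apply: is_derive_eq h _; rewrite /GRing.scale /=; ring.
- by move=> t /dg_le; rewrite subr_le0.
- have t_rc : (fun x : R => x) @ t0^'+ --> t0.
    by apply: cvg_at_right_filter; exact: cvg_id.
  apply: cvgB; last exact: cvgMl_tmp.
  apply: cvgM => //; apply: continuous_cvg; first exact: continuous_expR.
  exact: cvgMl_tmp.
Qed.

Lemma unweight {R : realType} {s K t0 t g0 gt : R} :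
  expR (s * t) * gt - K * t <= expR (s * t0) * g0 - K * t0 ->
  gt <= (K * t + expR (s * t0) * g0 - K * t0) * expR (- (s * t)).
Proof. by move=> h; rewrite expRN ler_pdivlMr ?expR_gt0 //; lra. Qed.

Section LyapunovAlgebra.
Context {R : realType} {V : normedModType R} {inner : V -> V -> R}.
Hypothesis inner_prod : is_inner_product inner.

Let innerE := (innerDl inner_prod, innerDr inner_prod, innerZl inner_prod,
  innerZr inner_prod, innerNl inner_prod, innerNr inner_prod).

Lemma inner_ext (a b : V) : (forall z, inner a z = inner b z) -> a = b.
Proof.
move=> ab; apply/eqP; rewrite -subr_eq0 -normr_eq0 -sqrf_eq0 (normE inner_prod).
by rewrite (innerDl inner_prod) (innerNl inner_prod) ab subrr.
Qed.

(* Pointwise energy dissipation: with a = y - x*, velocity v and gradient g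
   satisfying the strong-convexity gradient inequality, the derivative of the
   energy f(y) - f* + |s a + v|^2 / 2 along w' = - s v - g is at most - s
   times the energy. *)
Lemma energy_dissipation (a v g : V) (s fy fs : R) : 0 < s ->
  fy + inner g (- a) + s ^+ 2 / 2 * `|- a| ^+ 2 <= fs ->
  s * (fy - fs + 2^-1 * `|s *: a + v| ^+ 2)
  + (inner g v + 2^-1 * (2 * inner (s *: a + v) (- (s *: v) - g))) <= 0.
Proof.
move=> s_gt0 grad_ineq.
have vv_ge0 := inner_ge0 inner_prod v.
have s_grad : s * (fy + inner g (- a) + s ^+ 2 / 2 * `|- a| ^+ 2 - fs) <= 0.
  by rewrite pmulr_rle0 // subr_le0.
have s_vv : 0 <= s / 2 * inner v v by rewrite mulr_ge0 // divr_ge0 // ltW.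
rewrite !(normE inner_prod) !innerE (innerC inner_prod v a) (innerC inner_prod a g)
  (innerC inner_prod v g) in s_grad *.
lra.
Qed.

(* Pointwise bound on the derivative of the squared distance |a|^2 along
   the velocity v, in terms of the energy. *)
Lemma sqdist_derivative_bound (a v : V) {s e : R} : 0 < s -> 0 <= e ->
  2 * inner a v + s * `|a| ^+ 2 <= 2 / s * (e + 2^-1 * `|s *: a + v| ^+ 2).
Proof.
move=> s_gt0 e_ge0.
have vv_ge0 := inner_ge0 inner_prod v.
have vv_s : 0 <= 2 / s * e + s^-1 * inner v v.
  by have s_ge0 := ltW s_gt0; rewrite addr_ge0 ?mulr_ge0 ?divr_ge0 ?invr_ge0.
rewrite !(normE inner_prod) !innerE (innerC inner_prod v a).
have -> : 2 / s * (e + 2^-1 * (s * (s * inner a a) + s * inner a v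
  + (s * inner a v + inner v v))) =
  2 * inner a v + s * inner a a + (2 / s * e + s^-1 * inner v v) by field; lra.
lra.
Qed.

End LyapunovAlgebra.

Lemma inf_range_min {R : realType} {T : Type} {f : T -> R} {xs : T} :
  (forall x, f xs <= f x) -> inf (range f) = f xs.
Proof.
move=> xs_min; apply/eqP; rewrite eq_le; apply/andP; split.
  by apply: ge_inf; [exists (f xs) => _ [x _ <-] | exists xs].
by apply: lb_le_inf; [exists (f xs), xs | move=> _ [x _ <-]].
Qed.

Section Dynamics.
Context {R : realType} {V : normedModType R} {inner : V -> V -> R}
  {f : V -> R} {gradf : V -> V} {mu : R} {xs : V} {t0 : R} {u u1 u2 u3 : R -> V}.
Hypotheses (inner_prod : is_inner_product inner)
  (f_C1 : C1_with_gradient inner f gradf) (mu_gt0 : 0 < mu)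
  (f_sc : strongly_convex mu f) (xs_min : forall x, f xs <= f x).
Hypotheses (du : forall t, t0 < t -> is_derive t 1 u (u1 t))
  (du1 : forall t, t0 < t -> is_derive t 1 u1 (u2 t))
  (du2 : forall t, t0 < t -> is_derive t 1 u2 (u3 t)).
Hypotheses (u_rc : u x @[x --> t0^'+] --> u t0)
  (u1_rc : u1 x @[x --> t0^'+] --> u1 t0) (u2_rc : u2 x @[x --> t0^'+] --> u2 t0).
Hypothesis ode : forall t, t0 < t ->
  u3 t + (3 * Num.sqrt mu) *: u2 t + (2 * mu) *: u1 t
  + Num.sqrt mu *: gradf (u t + (Num.sqrt mu)^-1 *: u1 t) = 0.

Local Notation s := (Num.sqrt mu).

Definition lookahead t := u t + s^-1 *: u1 t.
Definition lookahead_vel t := u1 t + s^-1 *: u2 t.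
Definition momentum t := s *: (lookahead t - xs) + u1 t + s^-1 *: u2 t.
Definition energy t := f (lookahead t) - f xs + 2^-1 * `|momentum t| ^+ 2.

Let s_gt0 : 0 < s. Proof. by rewrite sqrtr_gt0. Qed.
Let s_neq0 : s != 0. Proof. exact: lt0r_neq0 s_gt0. Qed.
Let sqr_s : s ^+ 2 = mu. Proof. by rewrite sqr_sqrtr // ltW. Qed.

Lemma momentumE t : momentum t = s *: (lookahead t - xs) + lookahead_vel t.
Proof. by rewrite /momentum addrA. Qed.

Lemma lookahead_derive t : t0 < t -> is_derive t 1 lookahead (lookahead_vel t).
Proof.
move=> t0t; rewrite /lookahead /lookahead_vel.
exact: is_deriveD (du t t0t) (is_deriveZ s^-1 (du1 t t0t)).
Qed.

(* The equation of motion, rewritten as the first-order law w' = - s y' - grad f(y)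
   for the momentum w. *)
Lemma momentum_derive t : t0 < t ->
  is_derive t 1 momentum (- (s *: lookahead_vel t) - gradf (lookahead t)).
Proof.
move=> t0t.
have raw := is_deriveD (is_deriveD (is_deriveZ s
  (is_deriveB (lookahead_derive t t0t) (is_derive_cst xs t 1))) (du1 t t0t))
  (is_deriveZ s^-1 (du2 t t0t)).
apply: is_derive_eq raw _; apply: (inner_ext inner_prod) => z.
have := congr1 (fun v => inner v z) (ode t t0t).
rewrite /lookahead_vel /lookahead /= !(innerDl inner_prod, innerZl inner_prod,
  innerNl inner_prod) !(inner0l inner_prod) => ode_z.
have -> : inner (u3 t) z = - (3 * s * inner (u2 t) z + 2 * mu * inner (u1 t) z
  + s * inner (gradf (u t + s^-1 *: u1 t)) z) by lra.
by rewrite -[X in 2 * X * _]sqr_s; field.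
Qed.

Lemma energy_derive t : t0 < t -> is_derive t 1 energy
  (inner (gradf (lookahead t)) (lookahead_vel t)
   + 2^-1 * (2 * inner (momentum t) (- (s *: lookahead_vel t) - gradf (lookahead t)))).
Proof.
move=> t0t.
have df := is_derive_comp_grad f_C1 (lookahead_derive t t0t).
have dw := is_derive_sqnorm inner_prod (momentum_derive t t0t).
have h := is_deriveD (is_deriveB df (is_derive_cst (f xs) t 1)) (is_deriveZ 2^-1 dw).
by rewrite /energy; apply: is_derive_eq h _; rewrite subr0.
Qed.

Let f_cont : continuous f.
Proof. by move=> x; apply: differentiable_continuous; case: f_C1. Qed.

Lemma lookahead_rc : lookahead x @[x --> t0^'+] --> lookahead t0.
Proof. by apply: cvgD => //; apply: cvgZ => //; exact: cvg_cst. Qed.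

Lemma energy_rc : energy x @[x --> t0^'+] --> energy t0.
Proof.
apply: cvgD.
  by apply: cvgB; [exact: (continuous_cvg _ (f_cont _) lookahead_rc) | exact: cvg_cst].
apply: cvgMl_tmp; apply: cvg_sqnorm; rewrite /momentum.
apply: cvgD; last by apply: cvgZ => //; exact: cvg_cst.
apply: cvgD => //; apply: cvgZ; first exact: cvg_cst.
by apply: cvgB; [exact: lookahead_rc | exact: cvg_cst].
Qed.

Lemma energy_gap t : f (lookahead t) - f xs <= energy t.
Proof. by rewrite /energy lerDl mulr_ge0 ?invr_ge0 ?sqr_ge0. Qed.

Lemma energy_weighted_decay {t : R} : t0 <= t ->
  expR (s * t) * energy t <= expR (s * t0) * energy t0.
Proof.
have dissip t' : t0 < t' ->
    expR (s * t') * (inner (gradf (lookahead t')) (lookahead_vel t')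
      + 2^-1 * (2 * inner (momentum t') (- (s *: lookahead_vel t') - gradf (lookahead t')))
      + s * energy t') <= 0.
  move=> t0t'; rewrite pmulr_rle0 ?expR_gt0 // addrC /energy momentumE.
  apply: (energy_dissipation inner_prod) => //.
  have := strongly_convex_grad inner_prod f_sc (lookahead t') xs f_C1.
  by rewrite -opprB sqr_s.
move=> t0t; have := weighted_decay energy_derive dissip energy_rc t t0t.
by rewrite !mul0r !subr0.
Qed.

Lemma lookahead_value_bound {t : R} : t0 <= t ->
  f (lookahead t) - f xs <= energy t0 * expR (- (s * (t - t0))).
Proof.
move=> t0t; apply: le_trans (energy_gap t) _.
have decay := energy_weighted_decay t0t.
rewrite (_ : - (s * (t - t0)) = s * t0 + - (s * t)); last by ring.
by rewrite expRD expRN mulrA ler_pdivlMr ?expR_gt0 //; lra.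
Qed.

(* The value gap at u is controlled through the gradient inequality between
   u and its look-ahead point y = u + u' / s. *)
Lemma value_bound {t : R} : t0 <= t ->
  f (u t) - f xs <= (energy t0 * expR (s * t0) * s * t
    + expR (s * t0) * (f (u t0) - f xs) - energy t0 * expR (s * t0) * s * t0)
    * expR (- (s * t)).
Proof.
move=> t0t; apply: unweight.
apply: (weighted_decay (g := fun t => f (u t) - f xs)
  (dg := fun t => inner (gradf (u t)) (u1 t)) _ _ _ t t0t).
- move=> t' t0t'; have h := is_deriveB (is_derive_comp_grad f_C1 (du t' t0t'))
    (is_derive_cst (f xs) t' 1).
  by apply: is_derive_eq h _; rewrite subr0.
- move=> t' t0t'.
  have grad := strongly_convex_grad inner_prod f_sc (u t') (lookahead t') f_C1.
  have y_sub_u : lookahead t' - u t' = s^-1 *: u1 t' by rewrite /lookahead addrC addKr.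
  rewrite y_sub_u (innerZr inner_prod) in grad.
  have curv : 0 <= mu / 2 * `|s^-1 *: u1 t'| ^+ 2.
    by rewrite mulr_ge0 ?sqr_ge0 // divr_ge0 // ltW.
  have s_grad : s * (f (u t') + s^-1 * inner (gradf (u t')) (u1 t'))
      <= s * f (lookahead t') by rewrite ler_pM2l //; lra.
  rewrite mulrDr mulrA mulfV // mul1r in s_grad.
  have s_gap := ler_wpM2l (ltW s_gt0) (energy_gap t').
  have e_gap : expR (s * t') * (inner (gradf (u t')) (u1 t') + s * (f (u t') - f xs))
      <= expR (s * t') * (s * energy t').
    by rewrite ler_wpM2l ?(ltW (expR_gt0 _)) //; lra.
  have s_decay := ler_wpM2l (ltW s_gt0) (energy_weighted_decay (ltW t0t')).
  lra.
- by apply: cvgB; [exact: (continuous_cvg _ (f_cont _) u_rc) | exact: cvg_cst].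
Qed.

Lemma lookahead_dist_bound {t : R} : t0 <= t ->
  `|lookahead t - xs| ^+ 2 <= expR (s * t0) / s
    * (s * `|lookahead t0 - xs| ^+ 2 + 2 * energy t0 * (t - t0)) * expR (- (s * t)).
Proof.
move=> t0t.
have bound t' : t0 < t' ->
    expR (s * t') * (2 * inner (lookahead t' - xs) (lookahead_vel t' - 0)
      + s * `|lookahead t' - xs| ^+ 2) <= 2 * (energy t0 * expR (s * t0)) / s.
  move=> t0t'; rewrite subr0.
  have gap : 0 <= f (lookahead t') - f xs by rewrite subr_ge0.
  have := sqdist_derivative_bound inner_prod (lookahead t' - xs) (lookahead_vel t')
    s_gt0 gap.
  rewrite -momentumE -/(energy t') => sq_bound.
  have e_bound := ler_wpM2l (ltW (expR_gt0 (s * t'))) sq_bound.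
  have s_decay := energy_weighted_decay (ltW t0t').
  have -> : 2 * (energy t0 * expR (s * t0)) / s =
    2 / s * (expR (s * t0) * energy t0) by ring.
  apply: (le_trans e_bound); rewrite mulrCA ler_wpM2l ?divr_ge0 ?(ltW s_gt0) //.
have sq_der t' : t0 < t' -> is_derive t' 1 (fun x => `|lookahead x - xs| ^+ 2)
    (2 * inner (lookahead t' - xs) (lookahead_vel t' - 0)).
  move=> t0t'; apply: (is_derive_sqnorm inner_prod).
  exact: is_deriveB (lookahead_derive t' t0t') (is_derive_cst xs t' 1).
have rc : `|lookahead x - xs| ^+ 2 @[x --> t0^'+] --> `|lookahead t0 - xs| ^+ 2.
  by apply: cvg_sqnorm; apply: cvgB; [exact: lookahead_rc | exact: cvg_cst].
apply: (le_trans (unweight (weighted_decay sq_der bound rc t t0t))).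
rewrite le_eqVlt; apply/orP; left; apply/eqP; field.
by rewrite lt0r_neq0.
Qed.

(* Strong convexity converts the value bound into a distance bound. *)
Lemma dist_bound {t : R} : t0 <= t ->
  `|u t - xs| ^+ 2 <= 2 / mu * (energy t0 * expR (s * t0) * s * t
    + expR (s * t0) * (f (u t0) - f xs) - energy t0 * expR (s * t0) * s * t0)
    * expR (- (s * t)).
Proof.
move=> t0t; have growth := strongly_convex_growth inner_prod f_sc (u t) xs_min.
have -> : `|u t - xs| ^+ 2 = 2 / mu * (mu / 2 * `|u t - xs| ^+ 2).
  by field; rewrite lt0r_neq0.
rewrite -[X in _ <= X]mulrA ler_pM2l ?divr_gt0 //.
exact: le_trans growth (value_bound t0t).
Qed.

End Dynamics.

Theorem theorem5p1 (R : realType) (V : completeNormedModType R)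
  (inner : V -> V -> R) (f : V -> R) (gradf : V -> V) (mu : R) (xs : V)
  (t0 : R) (u u1 u2 u3 : R -> V) :
  is_inner_product inner ->
  C1_with_gradient inner f gradf ->
  0 < mu -> strongly_convex mu f ->
  (forall x, f xs <= f x) ->
  0 < t0 ->
  (* u is a classical solution on [t0, +oo[ : u1, u2, u3 are its first three
     derivatives on ]t0, +oo[, and u, u1, u2 are right-continuous at t0 *)
  (forall t, t0 < t -> is_derive t 1 u (u1 t)) ->
  (forall t, t0 < t -> is_derive t 1 u1 (u2 t)) ->
  (forall t, t0 < t -> is_derive t 1 u2 (u3 t)) ->
  u x @[x --> t0^'+] --> u t0 ->
  u1 x @[x --> t0^'+] --> u1 t0 ->
  u2 x @[x --> t0^'+] --> u2 t0 ->
  (forall t, t0 < t ->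
     u3 t + (3 * Num.sqrt mu) *: u2 t + (2 * mu) *: u1 t
     + Num.sqrt mu *: gradf (u t + (Num.sqrt mu)^-1 *: u1 t) = 0) ->
  let s := Num.sqrt mu in
  let m := inf (range f) in
  let y := fun t => u t + s^-1 *: u1 t in
  let E := fun t => f (y t) - m
                    + 2^-1 * `| s *: (y t - xs) + u1 t + s^-1 *: u2 t | ^+ 2 in
  let F0 := f (u t0) - m in
  let C := E t0 * expR (s * t0) in
  forall t, t0 <= t ->
    [/\ f (y t) - m <= E t0 * expR (- (s * (t - t0))),
        f (u t) - m <= (C * s * t + expR (s * t0) * F0 - C * s * t0)
                       * expR (- (s * t)),
        `| y t - xs | ^+ 2 <= expR (s * t0) / s
                              * (s * `| y t0 - xs | ^+ 2 + 2 * E t0 * (t - t0))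
                              * expR (- (s * t))
      & `| u t - xs | ^+ 2 <= 2 / mu
                              * (C * s * t + expR (s * t0) * F0 - C * s * t0)
                              * expR (- (s * t))].
Proof.
(* The positivity of t0 is not needed; inf f is the value at the minimizer. *)
move=> inner_prod f_C1 mu_gt0 f_sc xs_min _ du du1 du2 u_rc u1_rc u2_rc ode.
rewrite (inf_range_min xs_min) => s m y E F0 C t t0t.
split.
- by apply: (lookahead_value_bound inner_prod f_C1).
- by apply: (value_bound inner_prod f_C1).
- by apply: (lookahead_dist_bound inner_prod f_C1).
- by apply: (dist_bound inner_prod f_C1).
Qed.
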